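(* Let $n$ elements be grouped into $k$ (possibly overlapping) clusters $\mathcal{N}_1,\dots,\mathcal{N}_k\subseteq[n]$, each element belonging to at least one and at most $\Delta$ clusters. Suppose a noiseless quantized oracle, queried with $(i,j)$, returns $1$ if $i$ and $j$ belong to a common cluster and $0$ otherwise. Assume that for every cluster $i\in[k]$, $\left|\mathcal{N}_i\setminus\bigcup_{j\neq i}\mathcal{N}_j\right|>\alpha n$ for some $\alpha>0$. Let $S$ have size with $\alpha|S|=\log k+\log n$. Then the following algorithm recovers the clusters using $\binom{|S|}{2}+|S|\cdot(n-|S|)$ queries (with high probability over the random choice of $S$): choose $S\subseteq[n]$ uniformly at random and query all pairs in $S$; form the graph on vertex set $S$ with an edge $\{i,j\}$ iff the oracle returns $1$; construct maximal cliques of this graph covering all its edges, each maximal clique forming a cluster; query each element outside $S$ with all elements of $S$ and assign it to every cluster all of whose elements it tests positive with.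
   Context: No statistical assumptions are made on the clusters; the algorithm does not need to know $\Delta$. *)

From HB Require Import structures.
From mathcomp Require Import all_boot all_order all_algebra.
From mathcomp Require Import reals exp.
Set Implicit Arguments. Unset Strict Implicit. Unset Printing Implicit Defensive.
Import Order.TTheory GRing.Theory Num.Theory.

Section Clustering.
Variables (n k : nat).

Definition oracle (N : 'I_k -> {set 'I_n}) (i j : 'I_n) : bool :=
  [exists c, (i \in N c) && (j \in N c)].

Variable O : 'I_n -> 'I_n -> bool.
Variable S : {set 'I_n}.

(* Graph on vertex set S: edge {x,y} iff x != y and the oracle returns 1. *)
Definition is_clique (C : {set 'I_n}) : bool :=
  (C \subset S) && [forall x in C, forall y in C, (x != y) ==> O x y].

Definition maximal_clique (C : {set 'I_n}) : bool :=
  is_clique C && [forall D : {set 'I_n}, (is_clique D && (C \subset D)) ==> (D == C)].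

Definition clique_cover (F : {set {set 'I_n}}) : bool :=
  [forall C in F, maximal_clique C]
  && [forall x in S, exists C in F, x \in C]
  && [forall x in S, forall y in S,
        ((x != y) && O x y) ==> [exists C in F, (x \in C) && (y \in C)]].

(* Irredundant (inclusion-minimal) such cover: what the algorithm constructs. *)
Definition irredundant_cover (F : {set {set 'I_n}}) : bool :=
  clique_cover F && [forall F' : {set {set 'I_n}}, (F' \proper F) ==> ~~ clique_cover F'].

Definition extend_cluster (C : {set 'I_n}) : {set 'I_n} :=
  C :|: [set x | (x \notin S) && [forall y in C, O x y]].

Definition algorithm_output (F : {set {set 'I_n}}) : {set {set 'I_n}} :=
  [set extend_cluster C | C in F].

(* The queries made: all pairs inside S, and all pairs (x outside S, y in S),
   i.e. the 2-subsets of [n] meeting S. *)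
Definition queried_pairs : {set {set 'I_n}} :=
  [set e : {set 'I_n} | (#|e| == 2) && (e :&: S != set0)].

End Clustering.

From HB Require Import structures.
From mathcomp Require Import all_boot all_order all_algebra.
From mathcomp Require Import reals exp.
From mathcomp Require Import sequences zify.
Set Implicit Arguments.
Unset Strict Implicit.
Unset Printing Implicit Defensive.
Import Order.TTheory GRing.Theory Num.Theory.

(* If the sample S contains an element p_c of the private part of every
   cluster N_c, the algorithm is exact.  The oracle row of p_c is the indicator
   of N_c, so every clique of the sample graph through p_c lies in the trace
   N_c :&: S.  Hence the traces are maximal cliques and form a clique cover,
   every clique cover contains them, and the only irredundant cover is the set
   of traces.  Extending N_c :&: S by the elements positive against all of it
   gives back N_c, since such an element is positive against p_c.
   A uniform s-subset misses a private part of size m > alpha n with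
   probability C(n - m, s) / C(n, s) <= (1 - m/n)^s <= exp(-alpha s) = 1/(kn),
   and a union bound over the k clusters bounds the failure probability by 1/n. *)

Lemma leq_bin_mul_expn a b s : (a <= b)%N -> ('C(a, s) * b ^ s <= 'C(b, s) * a ^ s)%N.
Proof.
move=> le_ab; elim: s => [|s IHs]; first by rewrite !bin0.
rewrite -(leq_pmul2l (ltn0Sn s)) !mulnA !mul_bin_left !expnS.
have le_sub : ((a - s) * b <= (b - s) * a)%N by nia.
have := leq_mul le_sub IHs; nia.
Qed.

Lemma leq_card_bigcup (T I : finType) (P : pred I) (F : I -> {set T}) :
  (#|\bigcup_(i | P i) F i| <= \sum_(i | P i) #|F i|)%N.
Proof.
elim/big_ind2: _ => [|a A b B leA leB|//]; first by rewrite cards0.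
exact: leq_trans (leq_card_setU A B).1 (leq_add leA leB).
Qed.

Lemma bin2D a b : 'C(a + b, 2) = ('C(a, 2) + 'C(b, 2) + a * b)%N.
Proof.
elim: b => [|b IHb]; first by rewrite muln0 !addn0.
by rewrite addnS !binS !bin1 IHb; lia.
Qed.

Lemma card_draws_avoiding (T : finType) (A : {set T}) s :
  #|[set S : {set T} | [disjoint S & A] & #|S| == s]| = 'C(#|T| - #|A|, s).
Proof.
under eq_finset => S do rewrite disjoints_subset.
by rewrite cards_draws cardsCs setCK.
Qed.

Lemma leq_card_set_ord n (A : {set 'I_n}) : (#|A| <= n)%N.
Proof. by rewrite -[n in (_ <= n)%N]card_ord max_card. Qed.

Lemma card_queried_pairs n (S : {set 'I_n}) :
  #|queried_pairs S| = ('C(#|S|, 2) + #|S| * (n - #|S|))%N.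
Proof.
set pairs := [set e : {set 'I_n} | #|e| == 2].
set outside := [set e : {set 'I_n} | [disjoint e & S] & #|e| == 2].
have -> : queried_pairs S = pairs :\: outside.
  by apply/setP => e; rewrite !inE setI_eq0; case: (#|e| == 2); rewrite ?andbT ?andbF.
have outside_sub : outside \subset pairs by apply/subsetP => e; rewrite !inE => /andP[].
rewrite cardsD (setIidPr outside_sub) card_draws_avoiding /pairs card_draws card_ord.
by rewrite -[in 'C(n, 2)](subnKC (leq_card_set_ord S)) bin2D addnAC addnK.
Qed.

Section Recovery.
Variables (n k : nat) (N : 'I_k -> {set 'I_n}).

Definition private_part (c : 'I_k) : {set 'I_n} := N c :\: \bigcup_(j | j != c) N j.

Lemma oracleC x y : oracle N x y = oracle N y x.
Proof. by apply/existsP/existsP => -[c /andP[xc yc]]; exists c; rewrite xc yc. Qed.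

Lemma oracle_private c p : p \in private_part c -> forall y, oracle N p y = (y \in N c).
Proof.
case/setDP=> pc p_notin y; apply/existsP/idP => [[j /andP[pj yj]]|yc]; last first.
  by exists c; rewrite pc yc.
have [<- //|ne_jc] := eqVneq j c.
by case/bigcupP: p_notin; exists j.
Qed.

Variable S : {set 'I_n}.
Hypothesis N_cover : forall x, exists c, x \in N c.
Hypothesis S_meets_private : forall c, exists2 p, p \in S & p \in private_part c.

Definition cluster_trace c : {set 'I_n} := N c :&: S.

Lemma is_clique_trace c : is_clique (oracle N) S (cluster_trace c).
Proof.
rewrite /is_clique subsetIr; apply/forall_inP => x /setIP[xc _].
apply/forall_inP => y /setIP[yc _]; apply/implyP => _.
by apply/existsP; exists c; rewrite xc yc.
Qed.

Lemma clique_sub_trace c p C : p \in private_part c ->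
  is_clique (oracle N) S C -> p \in C -> C \subset cluster_trace c.
Proof.
move=> p_priv /andP[CS /forall_inP C_clique] pC; apply/subsetP => y yC.
rewrite inE (subsetP CS y yC) andbT.
have [-> |ne_yp] := eqVneq y p; first by case/setDP: p_priv.
have /forall_inP/(_ y yC) := C_clique p pC.
by rewrite eq_sym ne_yp (oracle_private p_priv).
Qed.

Lemma maximal_clique_trace c : maximal_clique (oracle N) S (cluster_trace c).
Proof.
rewrite /maximal_clique is_clique_trace; apply/forallP => D.
apply/implyP => /andP[D_clique le_trace_D]; rewrite eqEsubset le_trace_D andbT.
have [p pS p_priv] := S_meets_private c.
apply: (clique_sub_trace p_priv D_clique); apply: (subsetP le_trace_D).
by rewrite inE pS andbT; case/setDP: p_priv.
Qed.

Lemma clique_cover_traces : clique_cover (oracle N) S [set cluster_trace c | c : 'I_k].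
Proof.
rewrite /clique_cover -andbA; apply/and3P; split.
- by apply/forall_inP => C /imsetP[c _ ->]; apply: maximal_clique_trace.
- apply/forall_inP => x xS; have [c xc] := N_cover x.
  by apply/exists_inP; exists (cluster_trace c); rewrite ?imset_f // inE xc xS.
- apply/forall_inP => x xS; apply/forall_inP => y yS.
  apply/implyP => /andP[_ /existsP[c /andP[xc yc]]].
  by apply/exists_inP; exists (cluster_trace c); rewrite ?imset_f // !inE xc yc xS yS.
Qed.

Lemma traces_sub_clique_cover F : clique_cover (oracle N) S F ->
  [set cluster_trace c | c : 'I_k] \subset F.
Proof.
case/andP=> /andP[/forall_inP F_max /forall_inP F_vertices] _.
apply/subsetP => _ /imsetP[c _ ->]; have [p pS p_priv] := S_meets_private c.
have /exists_inP[C CF pC] := F_vertices p pS.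
case/andP: (F_max C CF) => C_clique /forallP/(_ (cluster_trace c)).
by rewrite is_clique_trace (clique_sub_trace p_priv C_clique pC) => /eqP ->.
Qed.

Lemma irredundant_cover_traces F : irredundant_cover (oracle N) S F ->
  F = [set cluster_trace c | c : 'I_k].
Proof.
case/andP=> F_cover /forallP F_min; have le_traces_F := traces_sub_clique_cover F_cover.
apply/esym/eqP; rewrite eqEproper le_traces_F /=.
by apply: contraTN clique_cover_traces => traces_proper; apply: (implyP (F_min _)).
Qed.

Lemma extend_cluster_trace c : extend_cluster (oracle N) S (cluster_trace c) = N c.
Proof.
have [p pS p_priv] := S_meets_private c.
apply/setP => x; rewrite !inE; have [xS|xS] /= := boolP (x \in S).
  by rewrite andbT orbF.
rewrite andbF /=.
apply/forall_inP/idP => [x_adj|xc y /setIP[yc _]]; last first.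
  by apply/existsP; exists c; rewrite xc yc.
by rewrite -(oracle_private p_priv) oracleC x_adj // inE pS; case/setDP: p_priv => ->.
Qed.

Lemma algorithm_output_clusters F : irredundant_cover (oracle N) S F ->
  algorithm_output (oracle N) S F = [set N c | c : 'I_k].
Proof.
move/irredundant_cover_traces ->; rewrite /algorithm_output -imset_comp.
by apply: eq_imset => c; apply: extend_cluster_trace.
Qed.

End Recovery.

Lemma card_draws_meeting (T I : finType) (A : I -> {set T}) s :
  ('C(#|T|, s) <= #|[set S : {set T} | #|S| == s & [forall i, ~~ [disjoint S & A i]]]|
                 + \sum_i 'C(#|T| - #|A i|, s))%N.
Proof.
set meeting := [set S : {set T} | _ & _].
pose avoiding i := [set S : {set T} | [disjoint S & A i] & #|S| == s].
have draws_sub : [set S : {set T} | #|S| == s] \subset meeting :|: \bigcup_i avoiding i.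
  apply/subsetP => S; rewrite !inE => S_s; rewrite S_s /=.
  have [//|/forallPn[i]] := boolP [forall i, ~~ [disjoint S & A i]].
  rewrite negbK => S_avoids.
  by apply/orP; right; apply/bigcupP; exists i; rewrite // inE S_avoids.
rewrite -card_draws; apply: leq_trans (subset_leq_card draws_sub) _.
apply: leq_trans (leq_card_setU _ _).1 _; rewrite leq_add2l.
apply: leq_trans (leq_card_bigcup _ _) _.
by under eq_bigr => i _ do rewrite card_draws_avoiding.
Qed.

Local Open Scope ring_scope.

Lemma gt0_of_mulr_lt_nat (R : numDomainType) (alpha : R) n m : (m <= n)%N ->
  alpha * n%:R < m%:R -> (0 < n)%N.
Proof.
rewrite lt0n => le_mn; apply: contraTneq => n0.
by move: le_mn; rewrite n0 leqn0 => /eqP ->; rewrite mulr0 ltxx.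
Qed.

Lemma bin_sub_le_expR (R : realType) n m s (alpha : R) : (m <= n)%N ->
  alpha * n%:R < m%:R -> 'C(n - m, s)%:R <= 'C(n, s)%:R * expR (- (alpha * s%:R)).
Proof.
move=> le_mn alpha_lt_m.
have n_gt0 : (0 : R) < n%:R by rewrite ltr0n (gt0_of_mulr_lt_nat le_mn alpha_lt_m).
have bin_le : ('C(n - m, s)%:R : R) <= 'C(n, s)%:R * ((n - m)%:R / n%:R) ^+ s.
  rewrite expr_div_n mulrA ler_pdivlMr ?exprn_gt0 // -!natrX -!natrM ler_nat.
  exact: leq_bin_mul_expn (leq_subr m n).
apply: le_trans bin_le _; rewrite ler_wpM2l // -mulNr expRM_natr.
apply: lerXn2r; rewrite ?nnegrE ?divr_ge0 ?expR_ge0 //.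
apply: le_trans (expR_ge1Dx _).
rewrite natrB // mulrBl divff ?gt_eqF // lerD2l lerN2.
by rewrite ler_pdivlMr // ltW // mulrC.
Qed.

Lemma sum_bin_sub_le_div (R : realType) (I : finType) (m : I -> nat) n s (alpha : R) :
  (forall i, m i <= n)%N -> (forall i, alpha * n%:R < (m i)%:R) ->
  alpha * s%:R = ln (#|I|%:R : R) + ln (n%:R : R) ->
  \sum_i ('C(n - m i, s)%:R : R) <= 'C(n, s)%:R / n%:R.
Proof.
move=> le_mn alpha_lt_m alpha_s.
have term_le i : ('C(n - m i, s)%:R : R) <= 'C(n, s)%:R / n%:R / #|I|%:R.
  have n_gt0 := gt0_of_mulr_lt_nat (le_mn i) (alpha_lt_m i).
  have I_gt0 : (0 < #|I|)%N by apply/card_gt0P; exists i.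
  have -> : 'C(n, s)%:R / n%:R / #|I|%:R = 'C(n, s)%:R * expR (- (alpha * s%:R)) :> R.
    by rewrite alpha_s expRN expRD !lnK ?posrE ?ltr0n // invfM mulrA [_ / _ / _]mulrAC.
  exact: bin_sub_le_expR (le_mn i) (alpha_lt_m i).
apply: le_trans (ler_sum _ (fun i _ => term_le i)) _.
rewrite sumr_const -[X in X <= _]mulr_natr; have [->|I_gt0] := posnP #|I|.
  by rewrite mulr0 divr_ge0.
by rewrite divfK ?pnatr_eq0 -?lt0n.
Qed.

Theorem theorem8 (R : realType) (n k Delta s : nat)
    (N : 'I_k -> {set 'I_n}) (alpha : R) :
  (forall x : 'I_n, (0 < #|[set c | x \in N c]| <= Delta)%N) ->
  0 < alpha ->
  (forall c : 'I_k, alpha * n%:R < #|N c :\: \bigcup_(j | j != c) N j|%:R) ->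
  alpha * s%:R = ln (k%:R : R) + ln (n%:R : R) ->
  (s <= n)%N ->
  (forall S : {set 'I_n}, #|S| = s ->
     #|queried_pairs S| = ('C(s, 2) + s * (n - s))%N)
  /\
  (#|[set S : {set 'I_n} | (#|S| == s) &&
       [forall F : {set {set 'I_n}},
          irredundant_cover (oracle N) S F ==>
          (algorithm_output (oracle N) S F == [set N c | c : 'I_k])]]|%:R
     / #|[set S : {set 'I_n} | #|S| == s]|%:R
   >= 1 - (n%:R : R)^-1).
Proof.
move=> N_degree _ private_large alpha_s le_sn.
split=> [S <-|]; first exact: card_queried_pairs.
set good := [set S | _]; set C := 'C(n, s).
set meeting :=
  [set S : {set 'I_n} | #|S| == s & [forall c, ~~ [disjoint S & private_part N c]]].
have meeting_good : meeting \subset good.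
  apply/subsetP => S; rewrite !inE => /andP[-> /forallP S_meets] /=.
  apply/forall_inP => F /algorithm_output_clusters -> //.
    by move=> x; case/andP: (N_degree x) => /card_gt0P[c]; rewrite inE; exists c.
  by move=> c; have /pred0Pn[p /andP[pS p_priv]] := S_meets c; exists p.
have := sum_bin_sub_le_div (fun c => leq_card_set_ord (private_part N c)) private_large.
rewrite card_ord => /(_ s alpha_s) missing_sum.
have := card_draws_meeting (private_part N) s; rewrite card_ord -/C -/meeting => C_le.
rewrite card_draws card_ord -/C ler_pdivlMr ?ltr0n ?bin_gt0 // mulrBl mul1r lerBlDr mulrC.
apply: le_trans (_ : (#|meeting| + \sum_c 'C(n - #|private_part N c|, s))%:R <= _).
  by rewrite ler_nat.
by rewrite natrD natr_sum lerD // ler_nat subset_leq_card.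
Qed.
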